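(* Let $\mathbf{d}$ be a finite sequence of nonnegative integers. Suppose that $$4\bigl(f(\mathbf{d})-1\bigr)B(\mathbf{d}) = \sum_{\mathbf{s}+\mathbf{t}=\mathbf{d}} v(\mathbf{s})v(\mathbf{t})B(\mathbf{s})B(\mathbf{t}) \quad\text{and}\quad \binom{f(\mathbf{d})-1}{2}B(\mathbf{d}) = \sum_{\mathbf{s}+\mathbf{t}=\mathbf{d}} \bigl(f(\mathbf{s})-1\bigr)\binom{v(\mathbf{t})}{2}B(\mathbf{s})B(\mathbf{t}).$$ Then $$\left((f(\mathbf{d})-1)\,v(\mathbf{d}) + \binom{f(\mathbf{d})-1}{2}\right)B(\mathbf{d}) = \sum_{\mathbf{s}+\mathbf{t}=\mathbf{d}} \bigl(v(\mathbf{s})+f(\mathbf{s})-1\bigr)\binom{v(\mathbf{t})}{2}B(\mathbf{s})B(\mathbf{t}),$$ equivalently $$\left(\binom{n(\mathbf{d})+1}{2}-\binom{v(\mathbf{d})}{2}\right)B(\mathbf{d}) = \sum_{\mathbf{s}+\mathbf{t}=\mathbf{d}} \bigl(1+n(\mathbf{s})\bigr)\binom{v(\mathbf{t})}{2}B(\mathbf{s})B(\mathbf{t}).$$ All sums run over ordered pairs $(\mathbf{s},\mathbf{t})$ of finite sequences of nonnegative integers with $\mathbf{s}+\mathbf{t}=\mathbf{d}$ componentwise.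
   Context: Maps are rooted planar maps (embeddings of finite connected multigraphs in the sphere up to orientation-preserving homeomorphism, with a distinguished half-edge). A map is bipartite if all its cycles have even length. For a finite sequence $\mathbf{d}=(d_1,d_2,\ldots)$ of nonnegative integers, $B(\mathbf{d})$ is the number of rooted planar bipartite maps with exactly $d_i$ faces of degree $2i$ for each $i$, with convention $B(\mathbf{0})=0$. Set $f(\mathbf{d})=\sum_i d_i$, $n(\mathbf{d})=\sum_i i\,d_i$, $v(\mathbf{d})=n(\mathbf{d})+2-f(\mathbf{d})$. *)

From mathcomp Require Import all_boot all_order all_algebra all_fingroup.
Set Implicit Arguments. Unset Strict Implicit. Unset Printing Implicit Defensive.

(* Face-degree sequences: d = [:: d_1; d_2; ...; d_k] as a seq nat,
   nth 0 d j = d_(j+1) = number of faces of degree 2(j+1). *)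

Definition fdeg (d : seq nat) : nat := sumn d.
Definition ndeg (d : seq nat) : nat :=
  \sum_(j < size d) (j.+1 * nth 0 d j).
Definition vdeg (d : seq nat) : nat := ndeg d + 2 - fdeg d.

(* Combinatorial (labelled) maps on the half-edge set 'I_m:
   sa.1 = vertex rotation sigma, sa.2 = edge involution alpha,
   faces = cycles of phi = sigma * alpha (i.e. x |-> alpha (sigma x)).
   The predicate says: alpha is a fixed-point-free involution, the map is
   connected, it is planar (Euler: V - E + F = 2, i.e. V + 2E + F = m + 2),
   it is bipartite (a proper 2-colouring of vertices exists), and it has
   exactly d_i faces of degree 2i for each i and no other faces. *)
Definition planar_bip_map (m : nat) (d : seq nat)
    (sa : {perm 'I_m} * {perm 'I_m}) : bool :=
  let s := sa.1 in let a := sa.2 in let phi := (s * a)%g in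
  [&& [forall x, a (a x) == x], [forall x, a x != x],
      [forall x, forall y, connect (fun u w => (w == s u) || (w == a u)) x y],
      #|porbits s| + #|porbits a| + #|porbits phi| == m + 2,
      [exists c : {ffun 'I_m -> bool},
          [forall x, (c (s x) == c x) && (c (a x) != c x)]],
      #|porbits phi| == sumn d &
      [forall j : 'I_(size d),
          #|[set F in porbits phi | #|F| == 2 * j.+1]| == nth 0 d j]].

(* Rooted maps have no nontrivial automorphisms, so the number of
   isomorphism classes of rooted maps with m = 2e half-edges equals the
   number of labelled maps on 'I_m divided by (m-1)!.
   The number of half-edges is forced: m = 2 n(d). *)
Definition Bmap (d : seq nat) : nat :=
  let m := 2 * ndeg d in
  if m == 0 then 0
  else #|[set sa | @planar_bip_map m d sa]| %/ (m.-1)`!.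

(* All s with 0 <= s_i <= d_i componentwise (same length as d);
   pairs (s, t) with s + t = d correspond to s <- splits d, t = dsub d s. *)
Fixpoint splits (d : seq nat) : seq (seq nat) :=
  match d with
  | [::] => [:: [::]]
  | x :: d' => [seq i :: s | i <- iota 0 x.+1, s <- splits d']
  end.

Definition dsub (d s : seq nat) : seq nat := [seq x.1 - x.2 | x <- zip d s].

From mathcomp Require Import all_boot all_order all_algebra all_fingroup.
From mathcomp Require Import zify ring.
Set Implicit Arguments.
Unset Strict Implicit.
Unset Printing Implicit Defensive.
Import GRing.Theory.
Local Open Scope ring_scope.

(* The pairs (s, t) with s + t = d are permuted by the involution s <-> t, so
   every convolution sum may be symmetrised.  As f and n are additive,
   v(s) + v(t) = v(d) + 2, and symmetrising sum v(s) v(t) (v(t) - 1) B(s) B(t)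
   turns it into v(d)/2 times the sum of the first hypothesis; thus
   sum v(s) C(v(t), 2) B(s) B(t) = (f(d) - 1) v(d) B(d), and adding the second
   hypothesis gives the first identity.  The second one is a rewriting of it:
   1 + n(s) = v(s) + f(s) - 1, and C(n + 1, 2) = C(v, 2) + v (f - 1) + C(f - 1, 2)
   by Vandermonde's identity when f(d) > 0, while B(d) = 0 when f(d) = 0. *)

Lemma fdeg_cons x d : fdeg (x :: d) = (x + fdeg d)%N.
Proof. by []. Qed.

Lemma ndeg_nil : ndeg [::] = 0%N.
Proof. by rewrite /ndeg big_ord0. Qed.

Lemma ndeg_cons x d : ndeg (x :: d) = (x + fdeg d + ndeg d)%N.
Proof.
rewrite /ndeg /fdeg /= big_ord_recl /= mul1n sumnE (big_nth 0) big_mkord.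
by rewrite -addnA -big_split; congr (_ + _)%N; apply: eq_bigr => i _; rewrite mulSn.
Qed.

Lemma fdeg_le_ndeg d : (fdeg d <= ndeg d)%N.
Proof. by elim: d => [|x d IH]; rewrite ?ndeg_nil // ndeg_cons fdeg_cons; lia. Qed.

Lemma ndeg_eq0 d : (ndeg d == 0%N) = (fdeg d == 0%N).
Proof.
apply/idP/idP => [|/eqP]; first by have := fdeg_le_ndeg d; lia.
by elim: d => [|x d IH]; rewrite ?ndeg_nil // ndeg_cons fdeg_cons; lia.
Qed.

Lemma Bmap_fdeg0 d : fdeg d = 0%N -> Bmap d = 0%N.
Proof. by move/eqP; rewrite -ndeg_eq0 /Bmap => /eqP ->. Qed.

Lemma splits_cons x d :
  splits (x :: d) = [seq i :: s | i <- iota 0 x.+1, s <- splits d].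
Proof. by []. Qed.

Lemma mem_splits d s : (s \in splits d) = all2 leq s d.
Proof.
elim: d s => [|x d IH] [|i s] //; rewrite splits_cons.
  by apply/negbTE/negP => /allpairsP [[j t] []].
rewrite [all2 _ _ _]/= -IH.
apply/allpairsP/andP => [[[j t] [ji ts [-> ->]]]|[ix sd]].
  by move: ji; rewrite mem_iota ltnS.
by exists (i, s); split; rewrite // mem_iota ltnS.
Qed.

Lemma uniq_splits d : uniq (splits d).
Proof.
elim: d => [|x d IH] //; rewrite splits_cons.
by apply: allpairs_uniq; rewrite ?iota_uniq // => -[i s] [j t] _ _ /= [-> ->].
Qed.

Lemma dsub_cons x d i s : dsub (x :: d) (i :: s) = (x - i)%N :: dsub d s.
Proof. by []. Qed.

Lemma dsub_splits d s : s \in splits d -> dsub d s \in splits d.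
Proof.
rewrite !mem_splits; elim: d s => [|x d IH] [|i s] // /andP [_ /IH sd].
by rewrite dsub_cons /= leq_subr.
Qed.

Lemma dsubK d s : s \in splits d -> dsub d (dsub d s) = s.
Proof.
rewrite mem_splits; elim: d s => [|x d IH] [|i s] // /andP [ix /IH sd].
by rewrite !dsub_cons subKn // sd.
Qed.

Lemma perm_splits_dsub d : perm_eq (splits d) [seq dsub d s | s <- splits d].
Proof.
apply: uniq_perm; rewrite ?uniq_splits ?map_inj_in_uniq ?uniq_splits //.
  by apply: (can_in_inj (g := dsub d)) => s; apply: dsubK.
move=> s; apply/idP/mapP => [sd|[t td ->]]; last exact: dsub_splits.
by exists (dsub d s); rewrite ?dsub_splits ?dsubK.
Qed.

Lemma big_splits_swap (R : Type) (idx : R) (op : Monoid.com_law idx) d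
    (F : seq nat -> seq nat -> R) :
  \big[op/idx]_(s <- splits d) F s (dsub d s) =
  \big[op/idx]_(s <- splits d) F (dsub d s) s.
Proof.
rewrite (perm_big _ (perm_splits_dsub d)) big_map !big_seq.
by apply: eq_bigr => s sd; rewrite dsubK.
Qed.

Lemma fdeg_dsub d s : s \in splits d -> (fdeg s + fdeg (dsub d s))%N = fdeg d.
Proof.
rewrite mem_splits; elim: d s => [|x d IH] [|i s] // /andP [ix /IH sd].
by rewrite dsub_cons !fdeg_cons -sd; lia.
Qed.

Lemma ndeg_dsub d s : s \in splits d -> (ndeg s + ndeg (dsub d s))%N = ndeg d.
Proof.
elim: d s => [|x d IH] [|i s]; rewrite mem_splits //=; first by rewrite ndeg_nil.
case/andP=> ix; rewrite -mem_splits => sd.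
by rewrite dsub_cons !ndeg_cons -(IH _ sd) -(fdeg_dsub sd); lia.
Qed.

Lemma vdeg_dsub d s : s \in splits d -> (vdeg s + vdeg (dsub d s))%N = (vdeg d + 2)%N.
Proof.
move=> sd; have := fdeg_dsub sd; have := ndeg_dsub sd.
have := fdeg_le_ndeg s; have := fdeg_le_ndeg (dsub d s); rewrite /vdeg; lia.
Qed.

Lemma ndeg_vdegZ s : 1 + (ndeg s)%:Z = (vdeg s)%:Z + (fdeg s)%:Z - 1.
Proof. by rewrite /vdeg; have := fdeg_le_ndeg s; lia. Qed.

Lemma bin2Z n : 2%:Z * ('C(n, 2))%:Z = n%:Z * (n%:Z - 1).
Proof. by have := mul_bin_diag n 1; rewrite bin1; case: n => [|n] //=; lia. Qed.

Lemma bin2D m n : 'C(m + n, 2) = ('C(m, 2) + m * n + 'C(n, 2))%N.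
Proof.
rewrite -binomial.Vandermonde !big_ord_recl big_ord0 /= !bin0 !bin1.
rewrite subn0 mul1n muln1 addn0 (_ : bump 0 (bump 0 0) = 2%N) //.
by rewrite addnC [(m * n + _)%N]addnC.
Qed.

Lemma sum_splits_vdeg_bin2 d (w : seq nat -> int) :
  4%:Z * \sum_(s <- splits d)
      (vdeg s)%:Z * ('C(vdeg (dsub d s), 2))%:Z * w s * w (dsub d s) =
  (vdeg d)%:Z * \sum_(s <- splits d)
      (vdeg s)%:Z * (vdeg (dsub d s))%:Z * w s * w (dsub d s).
Proof.
pose F s t := (vdeg s)%:Z * ((vdeg t)%:Z * ((vdeg t)%:Z - 1)) * w s * w t.
have double : 4%:Z * \sum_(s <- splits d)
      (vdeg s)%:Z * ('C(vdeg (dsub d s), 2))%:Z * w s * w (dsub d s) =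
    \sum_(s <- splits d) F s (dsub d s) + \sum_(s <- splits d) F s (dsub d s).
  by rewrite mulr_sumr -big_split; apply: eq_bigr => s _; rewrite /F -bin2Z /=; ring.
rewrite double {2}(big_splits_swap _ _ F) -big_split mulr_sumr big_seq [RHS]big_seq.
apply: eq_bigr => s sd; rewrite /F /=.
have vd : (vdeg d)%:Z = (vdeg s)%:Z + (vdeg (dsub d s))%:Z - 2.
  by have := vdeg_dsub sd; lia.
by rewrite vd; ring.
Qed.

Lemma bin2_ndeg_vdeg d : (0 < fdeg d)%N ->
  ('C(ndeg d + 1, 2))%:Z - ('C(vdeg d, 2))%:Z =
  ((fdeg d)%:Z - 1) * (vdeg d)%:Z + ('C(fdeg d - 1, 2))%:Z.
Proof.
move=> f_gt0; have f_le_n := fdeg_le_ndeg d.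
have -> : (ndeg d + 1 = vdeg d + (fdeg d - 1))%N by rewrite /vdeg; lia.
by rewrite bin2D !PoszD PoszM -subzn //; ring.
Qed.

Theorem mainTheorem3 (d : seq nat) :
  4%:Z * ((fdeg d)%:Z - 1) * (Bmap d)%:Z =
    \sum_(s <- splits d)
       ((vdeg s)%:Z * (vdeg (dsub d s))%:Z * (Bmap s)%:Z * (Bmap (dsub d s))%:Z) ->
  ('C(fdeg d - 1, 2))%:Z * (Bmap d)%:Z =
    \sum_(s <- splits d)
       (((fdeg s)%:Z - 1) * ('C(vdeg (dsub d s), 2))%:Z
          * (Bmap s)%:Z * (Bmap (dsub d s))%:Z) ->
  (((fdeg d)%:Z - 1) * (vdeg d)%:Z + ('C(fdeg d - 1, 2))%:Z) * (Bmap d)%:Z =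
    \sum_(s <- splits d)
       ((vdeg s)%:Z + (fdeg s)%:Z - 1) * ('C(vdeg (dsub d s), 2))%:Z
          * (Bmap s)%:Z * (Bmap (dsub d s))%:Z
  /\
  (('C(ndeg d + 1, 2))%:Z - ('C(vdeg d, 2))%:Z) * (Bmap d)%:Z =
    \sum_(s <- splits d)
       (1 + (ndeg s)%:Z) * ('C(vdeg (dsub d s), 2))%:Z
          * (Bmap s)%:Z * (Bmap (dsub d s))%:Z.
Proof.
move=> conv_vv conv_fbin.
have conv_vbin : \sum_(s <- splits d) (vdeg s)%:Z * ('C(vdeg (dsub d s), 2))%:Z
      * (Bmap s)%:Z * (Bmap (dsub d s))%:Z =
    ((fdeg d)%:Z - 1) * (vdeg d)%:Z * (Bmap d)%:Z.
  apply: (@mulfI _ 4%:Z) => //.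
  by rewrite (sum_splits_vdeg_bin2 d (fun s => (Bmap s)%:Z)) -conv_vv; ring.
have conv_vfbin : (((fdeg d)%:Z - 1) * (vdeg d)%:Z + ('C(fdeg d - 1, 2))%:Z) * (Bmap d)%:Z =
    \sum_(s <- splits d)
       ((vdeg s)%:Z + (fdeg s)%:Z - 1) * ('C(vdeg (dsub d s), 2))%:Z
          * (Bmap s)%:Z * (Bmap (dsub d s))%:Z.
  by rewrite mulrDl conv_fbin -conv_vbin -big_split; apply: eq_bigr => s _ /=; ring.
split=> //; under eq_bigr => s _ do rewrite ndeg_vdegZ.
rewrite -conv_vfbin; have [/Bmap_fdeg0 ->|/bin2_ndeg_vdeg -> //] := posnP (fdeg d).
by rewrite !mulr0.
Qed.
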